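(* Let $\mathbf{A}\in\mathbb{R}^{M\times N}$, $\mathbf{Y}\in\mathbb{R}^{M\times L}$, and let $\mathcal{S}_K=\{s_1<s_2<\dots<s_K\}\subseteq[N]$ with $K=|\mathcal{S}_K|\le N$. Let $\bar{\mathbf{A}}\in\mathbb{R}^{M\times K}$ be the submatrix of $\mathbf{A}$ consisting of the columns indexed by $\mathcal{S}_K$ (in this order). Let $(\bar{\mathbf{g}}(t),\bar{\mathbf{V}}(t))\in\mathbb{R}^K\times\mathbb{R}^{K\times L}$ follow the gradient flow of $\mathcal{L}_K(\bar{\mathbf{g}},\bar{\mathbf{V}})=\Vert\mathbf{Y}-\bar{\mathbf{A}}((\bar{\mathbf{g}}^{\odot2}\mathbf{1}_L)\odot\bar{\mathbf{V}})\Vert_F^2$. Define $\tilde{\mathbf{g}}(t)\in\mathbb{R}^N$ and $\tilde{\mathbf{V}}(t)\in\mathbb{R}^{N\times L}$ by $\tilde g_i(t)=\bar g_k(t)$ and $\tilde V_{il}(t)=\bar V_{kl}(t)$ if $i=s_k$ for some $k\in[K]$, and $\tilde g_i(t)=0$, $\tilde V_{il}(t)=0$ if $i\notin\mathcal{S}_K$. Then $(\tilde{\mathbf{g}}(t),\tilde{\mathbf{V}}(t))$ follows the gradient flow of $\mathcal{L}_N(\tilde{\mathbf{g}},\tilde{\mathbf{V}})=\Vert\mathbf{Y}-\mathbf{A}((\tilde{\mathbf{g}}^{\odot2}\mathbf{1}_L)\odot\tilde{\mathbf{V}})\Vert_F^2$, i.e., $$\frac{d}{dt}\tilde g_i(t)=-\frac{\partial\mathcal{L}_N}{\partial\tilde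 g_i}(\tilde{\mathbf g}(t),\tilde{\mathbf V}(t)),\qquad \frac{d}{dt}\tilde V_{il}(t)=-\frac{\partial\mathcal{L}_N}{\partial\tilde V_{il}}(\tilde{\mathbf g}(t),\tilde{\mathbf V}(t))$$ for all $i\in[N]$, $l\in[L]$.
   Context: $\odot$ is the entrywise product, $\mathbf{g}^{\odot2}$ the entrywise square, $\mathbf{1}_L$ the $1\times L$ all-ones row vector, so $((\mathbf g^{\odot 2}\mathbf 1_L)\odot\mathbf V)_{ij}=g_i^2V_{ij}$. Gradient flow of a loss $f$ means each coordinate's time derivative equals minus the corresponding partial derivative of $f$ along the curve. *)

From HB Require Import structures.
From mathcomp Require Import all_boot all_order all_algebra.
From mathcomp Require Import all_classical all_reals all_analysis.
Set Implicit Arguments. Unset Strict Implicit. Unset Printing Implicit Defensive.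
Import Order.TTheory GRing.Theory Num.Theory.
Local Open Scope ring_scope.

Definition frob2 {R : realType} {m n : nat} (X : 'M[R]_(m, n)) : R :=
  \sum_(i < m) \sum_(j < n) X i j ^+ 2.

Definition gsqV {R : realType} {n L : nat} (g : 'cV[R]_n) (V : 'M[R]_(n, L))
  : 'M[R]_(n, L) := \matrix_(i, l) (g i ord0 ^+ 2 * V i l).

Definition lossGV {R : realType} {M n L : nat} (A : 'M[R]_(M, n))
  (Y : 'M[R]_(M, L)) (g : 'cV[R]_n) (V : 'M[R]_(n, L)) : R :=
  frob2 (Y - A *m gsqV g V).

Definition setc {R : realType} {n : nat} (g : 'cV[R]_n) (i : 'I_n) (x : R)
  : 'cV[R]_n := \col_j (if j == i then x else g j ord0).
Definition setm {R : realType} {n L : nat} (V : 'M[R]_(n, L)) (i : 'I_n)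
  (l : 'I_L) (x : R) : 'M[R]_(n, L) :=
  \matrix_(j, k) (if (j == i) && (k == l) then x else V j k).

Definition grad_flow {R : realType} {n L : nat}
  (f : 'cV[R]_n -> 'M[R]_(n, L) -> R)
  (g : R -> 'cV[R]_n) (V : R -> 'M[R]_(n, L)) : Prop :=
  forall t : R,
    (forall i : 'I_n, exists d : R,
        is_derive (g t i ord0) 1 (fun x => f (setc (g t) i x) (V t)) d /\
        is_derive t 1 (fun s => g s i ord0) (- d)) /\
    (forall (i : 'I_n) (l : 'I_L), exists d : R,
        is_derive (V t i l) 1 (fun x => f (g t) (setm (V t) i l x)) d /\
        is_derive t 1 (fun s => V s i l) (- d)).

Definition embed_col {R : realType} {K N : nat} (s : 'I_K -> 'I_N)
  (gb : 'cV[R]_K) : 'cV[R]_N :=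
  \col_i (match [pick k | s k == i] with Some k => gb k ord0 | None => 0 end).
Definition embed_mx {R : realType} {K N L : nat} (s : 'I_K -> 'I_N)
  (Vb : 'M[R]_(K, L)) : 'M[R]_(N, L) :=
  \matrix_(i, l) (match [pick k | s k == i] with Some k => Vb k l | None => 0 end).

(* Padding is compatible with the loss: A times a zero-padded matrix only sees
   the columns indexed by S_K, so L_N at the padded point equals L_K at the
   reduced point, and this persists when a coordinate indexed by S_K is
   perturbed; hence those partials and time derivatives agree.  Off S_K each
   entry g_i^2 V_il keeps a zero factor when g_i or V_il alone is perturbed,
   so L_N is constant in that coordinate, its partial is 0, and the padded
   coordinate is constantly 0. *)

From HB Require Import structures.
From mathcomp Require Import all_boot all_order all_algebra.
From mathcomp Require Import all_classical all_reals all_analysis.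
Import Order.TTheory GRing.Theory Num.Theory.
Local Open Scope ring_scope.

Section ZeroPadding.
Variables (R : realType) (K N : nat) (s : 'I_K -> 'I_N).
Hypothesis s_inj : injective s.

Lemma pick_embedding (k : 'I_K) : [pick k' | s k' == s k] = Some k.
Proof. by case: pickP => [k' /eqP/s_inj -> // | /(_ k)]; rewrite eqxx. Qed.

Lemma pick_notin_codom (i : 'I_N) : i \notin codom s -> [pick k | s k == i] = None.
Proof. by move=> out; case: pickP => // k /eqP ski; rewrite -ski codom_f in out. Qed.

Lemma embed_colE (g : 'cV[R]_K) k : embed_col s g (s k) ord0 = g k ord0.
Proof. by rewrite mxE pick_embedding. Qed.

Lemma embed_mxE L (V : 'M[R]_(K, L)) k l : embed_mx s V (s k) l = V k l.
Proof. by rewrite mxE pick_embedding. Qed.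

Lemma embed_col_out (g : 'cV[R]_K) i : i \notin codom s -> embed_col s g i ord0 = 0.
Proof. by move=> out; rewrite mxE pick_notin_codom. Qed.

Lemma embed_mx_out L (V : 'M[R]_(K, L)) i l :
  i \notin codom s -> embed_mx s V i l = 0.
Proof. by move=> out; rewrite mxE pick_notin_codom. Qed.

Lemma setc_embed_col (g : 'cV[R]_K) k x :
  setc (embed_col s g) (s k) x = embed_col s (setc g k x).
Proof.
apply/matrixP => i j; rewrite !ord1 !mxE.
have [/codomP[k' ->]|out] := boolP (i \in codom s).
  by rewrite pick_embedding (inj_eq s_inj) mxE.
rewrite pick_notin_codom //; case: eqP => // ik.
by rewrite ik codom_f in out.
Qed.

Lemma setm_embed_mx L (V : 'M[R]_(K, L)) k l x :
  setm (embed_mx s V) (s k) l x = embed_mx s (setm V k l x).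
Proof.
apply/matrixP => i j; rewrite !mxE.
have [/codomP[k' ->]|out] := boolP (i \in codom s).
  by rewrite pick_embedding (inj_eq s_inj) mxE.
rewrite pick_notin_codom //; case: eqP => //= ik.
by rewrite ik codom_f in out.
Qed.

Lemma gsqV_embed L (g : 'cV[R]_K) (V : 'M[R]_(K, L)) :
  gsqV (embed_col s g) (embed_mx s V) = embed_mx s (gsqV g V).
Proof.
apply/matrixP => i l; rewrite !mxE.
by case: [pick k | s k == i] => [k|]; rewrite ?mxE ?mulr0.
Qed.

Lemma mulmx_embed_mx M L (A : 'M[R]_(M, N)) (X : 'M[R]_(K, L)) :
  A *m embed_mx s X = colsub s A *m X.
Proof.
apply/matrixP => a l; rewrite !mxE (bigID (mem (codom s))) /=.
rewrite [X in _ + X]big1 ?addr0 => [|i out]; last by rewrite embed_mx_out ?mulr0.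
rewrite -big_uniq ?(map_inj_uniq s_inj) ?enum_uniq //= big_image.
by apply: eq_bigr => k _; rewrite embed_mxE mxE.
Qed.

Lemma lossGV_embed M L (A : 'M[R]_(M, N)) (Y : 'M[R]_(M, L)) g V :
  lossGV A Y (embed_col s g) (embed_mx s V) = lossGV (colsub s A) Y g V.
Proof. by rewrite /lossGV gsqV_embed mulmx_embed_mx. Qed.

End ZeroPadding.

Lemma lossGV_setc_zero_row (R : realType) M n L (A : 'M[R]_(M, n))
  (Y : 'M[R]_(M, L)) (g : 'cV[R]_n) (V : 'M[R]_(n, L)) i x :
  (forall l, V i l = 0) -> lossGV A Y (setc g i x) V = lossGV A Y g V.
Proof.
move=> Vi0; rewrite /lossGV; congr (frob2 (_ - A *m _)).
by apply/matrixP => j l; rewrite !mxE; case: eqP => // ->; rewrite Vi0 !mulr0.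
Qed.

Lemma lossGV_setm_zero_g (R : realType) M n L (A : 'M[R]_(M, n))
  (Y : 'M[R]_(M, L)) (g : 'cV[R]_n) (V : 'M[R]_(n, L)) i l x :
  g i ord0 = 0 -> lossGV A Y g (setm V i l x) = lossGV A Y g V.
Proof.
move=> gi0; rewrite /lossGV; congr (frob2 (_ - A *m _)).
apply/matrixP => j l'; rewrite !mxE.
by case: eqP => //= ->; case: eqP => // _; rewrite gi0 expr0n !mul0r.
Qed.

Lemma is_derive_constant (R : numFieldType) (V W : normedModType R)
  (f : V -> W) (x v : V) : (forall y, f y = f x) -> is_derive x v f 0.
Proof.
by move=> fx; rewrite (_ : f = cst (f x)); [exact: is_derive_cst | apply: funext].
Qed.

Theorem lemmaC1 (R : realType) (M N L K : nat)
  (A : 'M[R]_(M, N)) (Y : 'M[R]_(M, L))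
  (s : 'I_K -> 'I_N) (hs : forall k1 k2 : 'I_K, (k1 < k2)%N -> (s k1 < s k2)%N)
  (gb : R -> 'cV[R]_K) (Vb : R -> 'M[R]_(K, L)) :
  grad_flow (lossGV (colsub s A) Y) gb Vb ->
  grad_flow (lossGV A Y) (fun t => embed_col s (gb t)) (fun t => embed_mx s (Vb t)).
Proof.
have s_inj : injective s by apply: inc_inj; apply: le_mono.
move=> flow t; have [flow_g flow_V] := flow t.
split=> [i|i l]; have [/codomP[k ->]|out] := boolP (i \in codom s).
- have [d [dloss dt]] := flow_g k; exists d; split.
    by rewrite embed_colE //; under eq_fun do rewrite setc_embed_col // lossGV_embed //.
  by under eq_fun do rewrite embed_colE //.
- have row0 l : embed_mx s (Vb t) i l = 0 by exact: embed_mx_out.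
  exists 0; rewrite oppr0; split; apply: is_derive_constant => y.
    by rewrite !lossGV_setc_zero_row.
  by rewrite !embed_col_out.
- have [d [dloss dt]] := flow_V k l; exists d; split.
    by rewrite embed_mxE //; under eq_fun do rewrite setm_embed_mx // lossGV_embed //.
  by under eq_fun do rewrite embed_mxE //.
- have g0 : embed_col s (gb t) i ord0 = 0 by exact: embed_col_out.
  exists 0; rewrite oppr0; split; apply: is_derive_constant => y.
    by rewrite !lossGV_setm_zero_g.
  by rewrite !embed_mx_out.
Qed.
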